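(* Let $\mathcal R$ be a confluent CCTRS, let $\rho\colon \ell\to r\Leftarrow a_1\approx b_1,\dots,a_k\approx b_k$ be a rule of $\mathcal R$, and let $\sigma$ be a substitution with $\mathrm{dom}(\sigma)\subseteq\mathrm{Var}(\ell)$ such that $\ell\sigma$ is quasi-decreasing. Then $\rho$ is not applicable to $\ell\sigma$ if and only if there exist an extension $\sigma'$ of $\sigma$ and an index $1\le i\le k$ such that $a_j\sigma'\to^*_{\mathcal R} b_j\sigma'$ for all $1\le j<i$ and $a_i\sigma'\to^*_{\mathcal R} u$ for some normal form $u$ which is not an instance of $b_i$.
   Context: Terms are built from a signature $\mathcal F$ and variables $\mathcal V$. An (oriented) conditional rewrite rule has the form $\ell\to r\Leftarrow a_1\approx b_1,\dots,a_k\approx b_k$ with $k\ge 0$. For a set $\mathcal R$ of such rules, $\to_{\mathcal R}=\bigcup_{i}\to_{\mathcal R_i}$ where $\mathcal R_0=\emptyset$ and $\mathcal R_{i+1}=\{\ell\sigma\to r\sigma\mid (\ell\to r\Leftarrow c)\in\mathcal R,\ a_j\sigma\to^*_{\mathcal R_i}b_j\sigma \text{ for all } j\}$; equivalently $s\to t$ iff there are a position $p$, a rule and a substitution $\sigma$ with $s|_p=\ell\sigma$, $t=s[r\sigma]_p$ and $a_j\sigma\to^*b_j\sigma$ for all $j$ (written $\mathcal R\vdash c\sigma$). Defined symbols are the root symbols of left-hand sides; all other symbols are constructors; constructor terms contain only constructors and variables. A CCTRS is such a system in which every rule has the form $f(\ell_1,\dots,\ell_n)\to r\Leftarrow a_1\approx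 b_1,\dots,a_k\approx b_k$ where $\ell_1,\dots,\ell_n,b_1,\dots,b_k$ are constructor terms, the terms $f(\ell_1,\dots,\ell_n),b_1,\dots,b_k$ pairwise have no common variables, $\mathrm{Var}(r)\subseteq\mathrm{Var}(\ell_1,\dots,\ell_n,b_1,\dots,b_k)$, and $\mathrm{Var}(a_i)\subseteq\mathrm{Var}(\ell_1,\dots,\ell_n,b_1,\dots,b_{i-1})$ for all $1\le i\le k$. A normal form is a term $s$ with no $t$ such that $s\to t$. The rule $\rho$ is applicable to $\ell\sigma$ if there is an extension $\tau$ of $\sigma$ with $a_j\tau\to^* b_j\tau$ for all $1\le j\le k$. Write $s\sqsupset t$ if there are a position $p$, a rule $\ell\to r\Leftarrow a_1\approx b_1,\dots,a_k\approx b_k$, a substitution $\sigma$ and $1\le i\le k$ with $s|_p=\ell\sigma$, $a_j\sigma\to^* b_j\sigma$ for $1\le j<i$ and $t=a_i\sigma$. A term $s$ is quasi-decreasing if there is no infinite sequence $s=u_0\,(\to\cup\sqsupset)\,u_1\,(\to\cup\sqsupset)\,u_2\cdots$. *)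

From Stdlib Require Import List Arith.
Import ListNotations.
Set Implicit Arguments.

Section CTRS.
Variables F V : Type.

(* Terms over signature F and variables V (arities are not enforced). *)
Inductive term : Type :=
| Var (x : V)
| Fun (f : F) (args : list term).

Fixpoint subst (s : V -> term) (t : term) : term :=
  match t with
  | Var x => s x
  | Fun f args => Fun f (map (subst s) args)
  end.

Inductive occurs (x : V) : term -> Prop :=
| occ_var : occurs x (Var x)
| occ_fun f args t : In t args -> occurs x t -> occurs x (Fun f args).

Inductive subterm_eq : term -> term -> Prop :=
| st_refl s : subterm_eq s s
| st_arg f args t u : In t args -> subterm_eq u t -> subterm_eq u (Fun f args).

(* An oriented conditional rule  l -> r <= a_1 ~ b_1, ..., a_k ~ b_k ;
   conditions are stored as pairs (a_i, b_i), 0-indexed. *)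
Record rule : Type := mkRule {
  lhs : term;
  rhs : term;
  conds : list (term * term)
}.

Variable R : rule -> Prop.

Inductive step : term -> term -> Prop :=
| step_root (rho : rule) (s : V -> term) :
    R rho ->
    (forall c, In c (conds rho) -> steps (subst s (fst c)) (subst s (snd c))) ->
    step (subst s (lhs rho)) (subst s (rhs rho))
| step_ctx f l1 u v l2 :
    step u v -> step (Fun f (l1 ++ u :: l2)) (Fun f (l1 ++ v :: l2))
with steps : term -> term -> Prop :=
| steps_refl t : steps t t
| steps_step t u v : step t u -> steps u v -> steps t v.

Definition confluent : Prop :=
  forall s t1 t2, steps s t1 -> steps s t2 ->
    exists u, steps t1 u /\ steps t2 u.

Definition normal_form (u : term) : Prop := ~ exists t, step u t.

Definition instance (u b : term) : Prop := exists th, u = subst th b.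

Definition defined (f : F) : Prop :=
  exists rho args, R rho /\ lhs rho = Fun f args.

Definition constructor_term (t : term) : Prop :=
  forall f args, subterm_eq (Fun f args) t -> ~ defined f.

Definition no_common_vars (ts : list term) : Prop :=
  forall i j ti tj x, i <> j -> nth_error ts i = Some ti -> nth_error ts j = Some tj ->
    occurs x ti -> occurs x tj -> False.

Definition cctrs_rule (rho : rule) : Prop :=
  exists f ls, lhs rho = Fun f ls /\
    (forall l, In l ls -> constructor_term l) /\
    (forall c, In c (conds rho) -> constructor_term (snd c)) /\
    no_common_vars (lhs rho :: map snd (conds rho)) /\
    (forall x, occurs x (rhs rho) ->
       occurs x (lhs rho) \/ exists c, In c (conds rho) /\ occurs x (snd c)) /\
    (forall i c x, nth_error (conds rho) i = Some c -> occurs x (fst c) ->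
       occurs x (lhs rho) \/
       exists j c', j < i /\ nth_error (conds rho) j = Some c' /\ occurs x (snd c')).

Definition CCTRS : Prop := forall rho, R rho -> cctrs_rule rho.

Definition sqsup (s t : term) : Prop :=
  exists u rho (sg : V -> term) i c,
    subterm_eq u s /\ R rho /\ u = subst sg (lhs rho) /\
    nth_error (conds rho) i = Some c /\
    (forall j c', j < i -> nth_error (conds rho) j = Some c' ->
       steps (subst sg (fst c')) (subst sg (snd c'))) /\
    t = subst sg (fst c).

Definition quasi_decreasing (s : term) : Prop :=
  ~ exists u : nat -> term, u 0 = s /\
      forall n, step (u n) (u (S n)) \/ sqsup (u n) (u (S n)).

End CTRS.

Definition extends {F V : Type} (l : term F V) (sg tau : V -> term F V) : Prop :=
  forall x, occurs x l -> tau x = sg x.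

Definition applicable {F V : Type} (R : rule F V -> Prop) (rho : rule F V)
  (sg : V -> term F V) : Prop :=
  exists tau, extends (lhs rho) sg tau /\
    forall c, In c (conds rho) -> steps R (subst tau (fst c)) (subst tau (snd c)).

(* If [rho] applies via [tau] and [sigma'] satisfies the first [i] conditions,
   then [tau] and [sigma'] are joinable on every variable of [l, b_1, ..., b_i]:
   reducts of an instance of a constructor term [b] are again instances of [b]
   (position by position, since [b] may be non-linear), and confluence glues
   the positions back together.  Hence a normal form of [a_i sigma'] is also a
   reduct of [b_i tau], so it is an instance of [b_i].
   Conversely, quasi-decreasingness of [l sigma] makes each [a_i] reached along
   the conditions terminating, so we normalise [a_1, a_2, ...] in turn and extend
   the substitution by a matcher for [b_i] until some normal form fails to
   match; if none fails, [rho] applies. *)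

From Stdlib Require Import List Arith Lia Classical ClassicalEpsilon.
Import ListNotations.

Lemma Forall2_in_impl {A B} (P Q : A -> B -> Prop) l1 l2 :
  Forall2 P l1 l2 -> (forall a b, In a l1 -> In b l2 -> P a b -> Q a b) ->
  Forall2 Q l1 l2.
Proof.
  induction 1 as [|a b l1 l2 Hab _ IH]; intros H; constructor.
  - apply H; simpl; auto.
  - apply IH. intros; apply H; simpl; auto.
Qed.

Lemma Forall2_in_conj {A B} (P Q S : A -> B -> Prop) l1 l2 :
  Forall2 P l1 l2 -> Forall2 Q l1 l2 ->
  (forall a b, In a l1 -> P a b -> Q a b -> S a b) -> Forall2 S l1 l2.
Proof.
  intros HP. revert HP. induction 1 as [|a b l1 l2 Hab _ IH]; intros HQ H;
    inversion HQ; subst; constructor.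
  - apply H; simpl; auto.
  - apply IH; auto. intros; apply H; simpl; auto.
Qed.

Lemma Forall2_In_l {A B} (P : A -> B -> Prop) l1 l2 a :
  Forall2 P l1 l2 -> In a l1 -> exists b, In b l2 /\ P a b.
Proof.
  induction 1 as [|a' b l1 l2 Hab _ IH]; intros Ha; [destruct Ha|].
  destruct Ha as [<-|Ha]; simpl; eauto.
  destruct (IH Ha) as [b' [? ?]]; eauto.
Qed.

Section Terms.
Context {F V : Type}.

Lemma term_ind' (P : term F V -> Prop) :
  (forall x, P (Var F x)) ->
  (forall f args, (forall t, In t args -> P t) -> P (Fun f args)) ->
  forall t, P t.
Proof.
  intros HV HF. fix IH 1. intros [x|f args].
  - apply HV.
  - apply HF. induction args as [|a args IHargs]; intros t Ht; [destruct Ht|].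
    destruct Ht as [<-|Ht]; [apply IH | apply IHargs, Ht].
Qed.

Lemma subst_ext (s1 s2 : V -> term F V) t :
  (forall x, occurs x t -> s1 x = s2 x) -> subst s1 t = subst s2 t.
Proof.
  revert s1 s2. induction t as [x|f args IH] using term_ind'; intros s1 s2 H; simpl.
  - apply H. constructor.
  - f_equal. apply map_ext_in. intros a Ha. apply IH; auto.
    intros x Hx. apply H. econstructor; eauto.
Qed.

End Terms.

Section Rewriting.
Context {F V : Type}.
Variable R : rule F V -> Prop.

Lemma steps_trans s t u : steps R s t -> steps R t u -> steps R s u.
Proof. induction 1; intros; [auto | econstructor; eauto]. Qed.

Lemma steps_ctx f l1 u v l2 : steps R u v ->
  steps R (Fun f (l1 ++ u :: l2)) (Fun f (l1 ++ v :: l2)).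
Proof. induction 1; [constructor | econstructor; [apply step_ctx|]; eauto]. Qed.

Lemma steps_args f (g h : term F V -> term F V) args : forall l1,
  (forall t, In t args -> steps R (g t) (h t)) ->
  steps R (Fun f (l1 ++ map g args)) (Fun f (l1 ++ map h args)).
Proof.
  induction args as [|a args IH]; intros l1 H; simpl; [constructor|].
  eapply steps_trans; [apply steps_ctx, H; simpl; auto|].
  specialize (IH (l1 ++ [h a])). rewrite <- !app_assoc in IH.
  apply IH. intros; apply H; simpl; auto.
Qed.

Lemma steps_subst (s1 s2 : V -> term F V) t :
  (forall x, occurs x t -> steps R (s1 x) (s2 x)) -> steps R (subst s1 t) (subst s2 t).
Proof.
  induction t as [x|f args IH] using term_ind'; intros H; simpl.
  - apply H. constructor.
  - apply (steps_args f (subst s1) (subst s2) args []). intros a Ha.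
    apply IH; auto. intros x Hx. apply H. econstructor; eauto.
Qed.

Lemma normal_form_steps_eq s t : normal_form R s -> steps R s t -> s = t.
Proof.
  intros Hs Hst. destruct Hst as [|s u t Hsu _]; [reflexivity|].
  exfalso; apply Hs; eauto.
Qed.

Lemma normal_form_arg f args t :
  normal_form R (Fun f args) -> In t args -> normal_form R t.
Proof.
  intros H Ht [t' Hs]. apply H. apply in_split in Ht as [l1 [l2 ->]].
  eexists. apply step_ctx, Hs.
Qed.

Lemma normal_form_exists t :
  ~ (exists u : nat -> term F V, u 0 = t /\ forall n, step R (u n) (u (S n))) ->
  exists w, steps R t w /\ normal_form R w.
Proof.
  intros Hfin. apply NNPP. intros Hnone. apply Hfin.
  assert (Hred : forall w, steps R t w -> exists w', step R w w').
  { intros w Hw. apply NNPP. intros Hw'. apply Hnone. eauto. }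
  set (next := fun w => epsilon (inhabits w) (fun w' => step R w w')).
  assert (Hnext : forall n, steps R t (Nat.iter n next t)).
  { induction n as [|n IHn]; [constructor|].
    eapply steps_trans; [exact IHn|]. econstructor; [|constructor].
    apply (epsilon_spec (inhabits _) (fun w' => step R _ w')), Hred, IHn. }
  exists (fun n => Nat.iter n next t). split; [reflexivity|].
  intros n. apply (epsilon_spec (inhabits _) (fun w' => step R _ w')), Hred, Hnext.
Qed.

Definition joinable s t := exists w, steps R s w /\ steps R t w.

Lemma joinable_sym s t : joinable s t -> joinable t s.
Proof. intros [w [? ?]]; exists w; auto. Qed.

Lemma joinable_subst (tau sg : V -> term F V) t :
  (forall x, occurs x t -> joinable (tau x) (sg x)) -> joinable (subst tau t) (subst sg t).
Proof.
  intros H.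
  set (meet := fun x => epsilon (inhabits (Var F x))
                 (fun w => steps R (tau x) w /\ steps R (sg x) w)).
  exists (subst meet t). split; apply steps_subst; intros x Hx;
    apply (epsilon_spec _ _ (H x Hx)).
Qed.

Lemma joinable_normal_form s u : joinable s u -> normal_form R u -> steps R s u.
Proof.
  intros [w [Hsw Huw]] Hu. rewrite (normal_form_steps_eq _ _ Hu Huw). exact Hsw.
Qed.

Hypothesis Hconf : confluent R.

Lemma joinable_reduct s s' t : joinable s t -> steps R s s' -> joinable s' t.
Proof.
  intros [w [Hsw Htw]] Hss'. destruct (Hconf _ _ _ Hss' Hsw) as [z [Hs'z Hwz]].
  exists z. split; [exact Hs'z | eapply steps_trans; eauto].
Qed.

End Rewriting.

Section ConstructorInstances.
Context {F V : Type}.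
Variable R : rule F V -> Prop.

(* Distinct occurrences of a variable may be matched by distinct terms, so this
   is weaker than [instance w b] for non-linear [b]. *)
Inductive matches (P : V -> term F V -> Prop) : term F V -> term F V -> Prop :=
| matches_var x w : P x w -> matches P (Var F x) w
| matches_fun f bs ws : Forall2 (matches P) bs ws -> matches P (Fun f bs) (Fun f ws).

Lemma matches_subst (tau : V -> term F V) b :
  matches (fun x w => steps R (tau x) w) b (subst tau b).
Proof.
  induction b as [x|f bs IH] using term_ind'; simpl; constructor; [constructor|].
  induction bs as [|b bs IHbs]; simpl; constructor.
  - apply IH; simpl; auto.
  - apply IHbs. intros; apply IH; simpl; auto.
Qed.

Lemma matches_occurs P b w x : matches P b w -> occurs x b -> exists w', P x w'.
Proof.
  revert w. induction b as [y|f bs IH] using term_ind'; intros w Hm Hx.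
  - inversion Hm; inversion Hx; subst; eauto.
  - inversion Hm as [|f0 bs0 ws Hbs]; subst. inversion Hx as [|f1 a t Ht Hxt]; subst.
    destruct (Forall2_In_l _ _ _ _ Hbs Ht) as [w1 [_ Hw1]]. eauto.
Qed.

Lemma matches_conj P Q b w : matches P b w -> matches Q b w ->
  matches (fun x w => P x w /\ Q x w) b w.
Proof.
  revert w. induction b as [y|f bs IH] using term_ind'; intros w HP HQ.
  - inversion HP; inversion HQ; subst. constructor; auto.
  - inversion HP as [|f0 bs0 ws HPs]; subst. inversion HQ as [|f1 bs1 ws1 HQs]; subst.
    constructor. apply (Forall2_in_conj _ _ _ _ _ HPs HQs). intros; apply IH; auto.
Qed.

Lemma matches_normal_form P b w : matches P b w -> normal_form R w ->
  matches (fun x w => P x w /\ normal_form R w) b w.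
Proof.
  revert w. induction b as [y|f bs IH] using term_ind'; intros w Hm Hw.
  - inversion Hm; subst. constructor; auto.
  - inversion Hm as [|f0 bs0 ws Hbs]; subst. constructor.
    apply (Forall2_in_impl _ _ _ _ Hbs). intros b v Hb Hv Hbv.
    apply IH; [exact Hb | exact Hbv | eapply normal_form_arg; eauto].
Qed.

Lemma matches_instance P b w : (forall x w1 w2, P x w1 -> P x w2 -> w1 = w2) ->
  matches P b w -> instance w b.
Proof.
  intros Hfun Hm.
  set (th := fun x => epsilon (inhabits (Var F x)) (P x)).
  exists th. revert w Hm. induction b as [y|f bs IH] using term_ind'; intros w Hm.
  - inversion Hm; subst. apply (Hfun y); [assumption|].
    apply (epsilon_spec (inhabits (Var F y)) (P y)). eauto.
  - inversion Hm as [|f0 bs0 ws Hbs]; subst. simpl. f_equal. clear Hm.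
    induction Hbs as [|b v bs vs Hbv _ IHbs]; simpl; [reflexivity|].
    f_equal; [apply IH; simpl; auto | apply IHbs; intros; apply IH; simpl; auto].
Qed.

Hypothesis HC : CCTRS R.

Lemma step_below_constructor f ws w' : ~ defined R f -> step R (Fun f ws) w' ->
  exists l1 u v l2, ws = l1 ++ u :: l2 /\ w' = Fun f (l1 ++ v :: l2) /\ step R u v.
Proof.
  intros Hf Hs. remember (Fun f ws) as s eqn:Es.
  destruct Hs as [rho sg HR _ | g l1 u v l2 Huv].
  - exfalso. destruct (HC rho HR) as [g [ls [Hl _]]]. apply Hf.
    rewrite Hl in Es. injection Es as <- _. exists rho, ls; auto.
  - injection Es as <- <-. eauto 7.
Qed.

(* The root of a constructor term is never rewritten, so reduction only acts
   inside the substituted variables. *)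
Lemma matches_step (P : V -> term F V -> Prop) :
  (forall x w w', P x w -> step R w w' -> P x w') ->
  forall b w w', constructor_term R b -> matches P b w -> step R w w' -> matches P b w'.
Proof.
  intros HP b. induction b as [x|f bs IH] using term_ind'; intros w w' Hb Hm Hs.
  - inversion Hm; subst. constructor. eauto.
  - inversion Hm as [|f0 bs0 ws Hbs]; subst.
    assert (Hf : ~ defined R f) by (apply (Hb f bs); constructor).
    destruct (step_below_constructor _ _ _ Hf Hs) as [l1 [u [v [l2 [-> [-> Huv]]]]]].
    apply Forall2_app_inv_r in Hbs as [bs1 [bs2 [H1 [H2 ->]]]].
    inversion H2 as [|b0 u0 bs3 l3 Hb0 H3]; subst.
    assert (Hin : In b0 (bs1 ++ b0 :: bs3)) by (apply in_or_app; simpl; auto).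
    constructor. apply Forall2_app; [exact H1|]. constructor; [|exact H3].
    apply IH with u; auto.
    intros g a Hsub. apply (Hb g a). econstructor; eauto.
Qed.

Lemma matches_steps (P : V -> term F V -> Prop) :
  (forall x w w', P x w -> step R w w' -> P x w') ->
  forall b w w', constructor_term R b -> matches P b w -> steps R w w' -> matches P b w'.
Proof.
  intros HP b w w' Hb Hm Hs. revert Hm.
  induction Hs; [auto | intros; eapply IHHs, matches_step; eauto].
Qed.

Lemma matches_reduct_subst (tau : V -> term F V) b w :
  constructor_term R b -> steps R (subst tau b) w ->
  matches (fun x w => steps R (tau x) w) b w.
Proof.
  intros Hb Hw. refine (matches_steps _ _ b _ _ Hb (matches_subst tau b) Hw).
  intros x v v' Hv Hvv'. eapply steps_trans; [exact Hv|].
  econstructor; [exact Hvv' | constructor].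
Qed.

Lemma joinable_constructor_subst (tau sg : V -> term F V) b x :
  constructor_term R b -> joinable R (subst tau b) (subst sg b) -> occurs x b ->
  joinable R (tau x) (sg x).
Proof.
  intros Hb [w [Htw Hsw]] Hx.
  destruct (matches_occurs _ _ _ x (matches_conj _ _ _ _
    (matches_reduct_subst tau b w Hb Htw) (matches_reduct_subst sg b w Hb Hsw)) Hx)
    as [w' Hw']. exists w'. exact Hw'.
Qed.

Hypothesis Hconf : confluent R.

Lemma normal_form_reduct_instance (tau : V -> term F V) b u :
  constructor_term R b -> steps R (subst tau b) u -> normal_form R u -> instance u b.
Proof.
  intros Hb Hu Hnf.
  refine (matches_instance _ _ _ _ (matches_normal_form _ _ _
    (matches_reduct_subst tau b u Hb Hu) Hnf)).
  intros x w1 w2 [H1 N1] [H2 N2]. destruct (Hconf _ _ _ H1 H2) as [z [A B]].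
  rewrite (normal_form_steps_eq R _ _ N1 A), (normal_form_steps_eq R _ _ N2 B).
  reflexivity.
Qed.

End ConstructorInstances.

Section ConditionalRule.
Context {F V : Type}.
Variable R : rule F V -> Prop.
Variable rho : rule F V.
Hypothesis HC : CCTRS R.
Hypothesis HR : R rho.

Definition conds_hold_below (sg : V -> term F V) (n : nat) : Prop :=
  forall j c, j < n -> nth_error (conds rho) j = Some c ->
    steps R (subst sg (fst c)) (subst sg (snd c)).

Definition cond_refuted (sg : V -> term F V) (i : nat) : Prop :=
  exists c, nth_error (conds rho) i = Some c /\ conds_hold_below sg i /\
    exists u, steps R (subst sg (fst c)) u /\ normal_form R u /\ ~ instance u (snd c).

(* The variables of [l, b_1, ..., b_j], the conditions being 0-indexed. *)
Definition bound_before (j : nat) (x : V) : Prop :=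
  occurs x (lhs rho) \/
  exists j' c, j' < j /\ nth_error (conds rho) j' = Some c /\ occurs x (snd c).

Lemma conds_hold_below_all sg :
  conds_hold_below sg (length (conds rho)) <->
  forall c, In c (conds rho) -> steps R (subst sg (fst c)) (subst sg (snd c)).
Proof.
  split.
  - intros H c Hc. apply In_nth_error in Hc as [j Hj]. apply (H j); [|exact Hj].
    apply nth_error_Some. congruence.
  - intros H j c _ Hj. apply H, (nth_error_In _ _ Hj).
Qed.

Lemma bound_before_mono j j' x : j <= j' -> bound_before j x -> bound_before j' x.
Proof.
  intros Hle [Hx | [j0 [c [Hlt Hc]]]]; [left; exact Hx|].
  right; exists j0, c; split; [lia | exact Hc].
Qed.

Lemma bound_before_S j x : bound_before (S j) x ->
  bound_before j x \/ exists c, nth_error (conds rho) j = Some c /\ occurs x (snd c).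
Proof.
  intros [Hx | [j' [c [Hlt [Hc Hx]]]]]; [left; left; exact Hx|].
  destruct (Nat.eq_dec j' j) as [->|Hne]; [right; eauto|].
  left; right. exists j', c. split; [lia | auto].
Qed.

Lemma cond_rhs_constructor c : In c (conds rho) -> constructor_term R (snd c).
Proof. destruct (HC rho HR) as [f [ls [_ [_ [Hb _]]]]]. exact (Hb c). Qed.

Lemma cond_lhs_bound i c x :
  nth_error (conds rho) i = Some c -> occurs x (fst c) -> bound_before i x.
Proof. destruct (HC rho HR) as [f [ls [_ [_ [_ [_ [_ Ha]]]]]]]. exact (Ha i c x). Qed.

Lemma bound_before_cond_rhs_disjoint j c x :
  nth_error (conds rho) j = Some c -> bound_before j x -> ~ occurs x (snd c).
Proof.
  destruct (HC rho HR) as [f [ls [_ [_ [_ [Hnc _]]]]]].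
  assert (Hrhs : forall j c, nth_error (conds rho) j = Some c ->
            nth_error (lhs rho :: map snd (conds rho)) (S j) = Some (snd c)).
  { intros j' c' Hc'. simpl. rewrite nth_error_map, Hc'. reflexivity. }
  intros Hc [Hx | [j' [c' [Hlt [Hc' Hx]]]]] Hxc.
  - apply (Hnc 0 (S j) _ _ x ltac:(discriminate) eq_refl (Hrhs _ _ Hc) Hx Hxc).
  - apply (Hnc (S j') (S j) _ _ x ltac:(lia) (Hrhs _ _ Hc') (Hrhs _ _ Hc) Hx Hxc).
Qed.

Section Joinability.
Hypothesis Hconf : confluent R.
Variables tau sg : V -> term F V.
Hypothesis Hagree : forall x, occurs x (lhs rho) -> tau x = sg x.
Hypothesis Htau :
  forall c, In c (conds rho) -> steps R (subst tau (fst c)) (subst tau (snd c)).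

Lemma joinable_cond_lhs j c :
  nth_error (conds rho) j = Some c ->
  (forall x, bound_before j x -> joinable R (tau x) (sg x)) ->
  joinable R (subst tau (snd c)) (subst sg (fst c)).
Proof.
  intros Hc Hj. apply (joinable_reduct R Hconf (subst tau (fst c))).
  - apply joinable_subst. intros x Hx. apply Hj, (cond_lhs_bound _ _ _ Hc Hx).
  - apply Htau, (nth_error_In _ _ Hc).
Qed.

Lemma joinable_bound_before i : conds_hold_below sg i ->
  forall j, j <= i -> forall x, bound_before j x -> joinable R (tau x) (sg x).
Proof.
  intros Hsg j. induction j as [|j IHj]; intros Hle x Hx.
  - destruct Hx as [Hx | [j' [c [Hlt _]]]]; [|lia].
    rewrite (Hagree x Hx). exists (sg x); split; constructor.
  - destruct (bound_before_S _ _ Hx) as [Hx' | [c [Hc Hxc]]]; [apply IHj; [lia | exact Hx']|].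
    apply (joinable_constructor_subst R HC _ _ (snd c)); [| |exact Hxc].
    + apply cond_rhs_constructor, (nth_error_In _ _ Hc).
    + apply joinable_sym, (joinable_reduct R Hconf (subst sg (fst c))).
      * apply joinable_sym, (joinable_cond_lhs j); [exact Hc|].
        intros; apply IHj; [lia | auto].
      * apply (Hsg j); [lia | exact Hc].
Qed.

Lemma cond_normal_form_instance i c u :
  conds_hold_below sg i -> nth_error (conds rho) i = Some c ->
  steps R (subst sg (fst c)) u -> normal_form R u -> instance u (snd c).
Proof.
  intros Hsg Hc Hu Hnf.
  apply (normal_form_reduct_instance R HC Hconf tau); [| |exact Hnf].
  { apply cond_rhs_constructor, (nth_error_In _ _ Hc). }
  apply joinable_normal_form; [|exact Hnf].
  apply joinable_sym, (joinable_reduct R Hconf (subst sg (fst c))); [|exact Hu].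
  apply joinable_sym, (joinable_cond_lhs i); [exact Hc|].
  apply (joinable_bound_before i Hsg i (le_n i)).
Qed.

End Joinability.

Section Refutation.
Variable sigma : V -> term F V.
Hypothesis HQ : quasi_decreasing R (subst sigma (lhs rho)).

Lemma cond_lhs_normalizes sj j c :
  extends (lhs rho) sigma sj -> conds_hold_below sj j -> nth_error (conds rho) j = Some c ->
  exists w, steps R (subst sj (fst c)) w /\ normal_form R w.
Proof.
  intros Hext Hsj Hc. apply normal_form_exists. intros [u [Hu0 Hu]]. apply HQ.
  exists (fun n => match n with 0 => subst sigma (lhs rho) | S m => u m end).
  split; [reflexivity|]. intros [|n]; [right | left; apply Hu].
  exists (subst sigma (lhs rho)), rho, sj, j, c.
  split; [constructor|]. split; [exact HR|].
  split; [apply subst_ext; intros x Hx; symmetry; apply Hext, Hx|].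
  split; [exact Hc|]. split; [exact Hsj | exact Hu0].
Qed.

Lemma conds_hold_below_extend sj j c th :
  extends (lhs rho) sigma sj -> conds_hold_below sj j -> nth_error (conds rho) j = Some c ->
  steps R (subst sj (fst c)) (subst th (snd c)) ->
  exists sj', extends (lhs rho) sigma sj' /\ conds_hold_below sj' (S j).
Proof.
  intros Hext Hsj Hc Hmatch.
  set (sj' := fun x => if excluded_middle_informative (occurs x (snd c)) then th x else sj x).
  assert (Hold : forall x, bound_before j x -> sj' x = sj x).
  { intros x Hx. unfold sj'. destruct excluded_middle_informative as [Hxc|]; [|reflexivity].
    destruct (bound_before_cond_rhs_disjoint _ _ _ Hc Hx Hxc). }
  assert (Hnew : forall x, occurs x (snd c) -> sj' x = th x).
  { intros x Hx. unfold sj'. destruct excluded_middle_informative; tauto. }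
  exists sj'. split.
  { intros x Hx. rewrite Hold by (left; exact Hx). apply Hext, Hx. }
  intros j' c' Hlt Hc'.
  rewrite (subst_ext sj' sj (fst c')) by (intros x Hx; apply Hold;
    apply (bound_before_mono j'); [lia | exact (cond_lhs_bound _ _ _ Hc' Hx)]).
  destruct (Nat.eq_dec j' j) as [->|Hne].
  - rewrite Hc in Hc'. injection Hc' as <-.
    rewrite (subst_ext sj' th (snd c)) by exact Hnew. exact Hmatch.
  - rewrite (subst_ext sj' sj (snd c')) by (intros x Hx; apply Hold; right; exists j', c';
      split; [lia | auto]).
    apply (Hsj j'); [lia | exact Hc'].
Qed.

Lemma cond_refuted_or_conds_hold n : n <= length (conds rho) ->
  (exists sg i, extends (lhs rho) sigma sg /\ cond_refuted sg i) \/
  exists sj, extends (lhs rho) sigma sj /\ conds_hold_below sj n.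
Proof.
  induction n as [|n IHn]; intros Hn.
  { right. exists sigma. split; [intros x _; reflexivity | intros j c Hj; lia]. }
  destruct (IHn ltac:(lia)) as [Href | [sj [Hext Hsj]]]; [left; exact Href|].
  destruct (nth_error (conds rho) n) as [c|] eqn:Hc;
    [|apply nth_error_None in Hc; lia].
  destruct (cond_lhs_normalizes sj n c Hext Hsj Hc) as [w [Hw Hnf]].
  destruct (classic (instance w (snd c))) as [[th ->] | Hni].
  - right. exact (conds_hold_below_extend sj n c th Hext Hsj Hc Hw).
  - left. exists sj, n. split; [exact Hext|]. exists c. eauto 6.
Qed.

End Refutation.

End ConditionalRule.

Theorem lemma3p2 (F V : Type) (R : rule F V -> Prop) (rho : rule F V)
  (sigma : V -> term F V) :
  CCTRS R -> confluent R -> R rho ->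
  (forall x, sigma x <> Var F x -> occurs x (lhs rho)) ->
  quasi_decreasing R (subst sigma (lhs rho)) ->
  (~ applicable R rho sigma <->
   exists (sigma' : V -> term F V) (i : nat) (c : term F V * term F V),
     extends (lhs rho) sigma sigma' /\
     nth_error (conds rho) i = Some c /\
     (forall j c', j < i -> nth_error (conds rho) j = Some c' ->
        steps R (subst sigma' (fst c')) (subst sigma' (snd c'))) /\
     exists u, steps R (subst sigma' (fst c)) u /\ normal_form R u /\
       ~ instance u (snd c)).
Proof.
  intros HC Hconf HR _ HQ. split.
  - intros Hna.
    destruct (cond_refuted_or_conds_hold R rho HC HR sigma HQ _ (le_n _))
      as [[sg [i [Hext [c [Hc [Hsg Hu]]]]]] | [sj [Hext Hsj]]].
    + exists sg, i, c. auto.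
    + exfalso. apply Hna. exists sj. split; [exact Hext|].
      apply conds_hold_below_all, Hsj.
  - intros [sg [i [c [Hext [Hc [Hsg [u [Hu [Hnf Hni]]]]]]]]] [tau [Htau Hall]].
    apply Hni, (cond_normal_form_instance R rho HC HR Hconf tau sg
      (fun x Hx => eq_trans (Htau x Hx) (eq_sym (Hext x Hx))) Hall i c u Hsg Hc Hu Hnf).
Qed.
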